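(* Let $\mathcal{X}$ and $\mathcal{Y}$ be finite sets with $2 \le |\mathcal{X}|,|\mathcal{Y}| < \infty$, and let $X,Y$ have joint pmf $P_{X,Y}$ with $P_X(x)>0$ for all $x\in\mathcal{X}$ and $P_Y(y)>0$ for all $y\in\mathcal{Y}$. Writing $\eta_{\chi^2}=\eta_{\chi^2}(P_X,P_{Y|X})$ and $\eta_{\mathrm{KL}}=\eta_{\mathrm{KL}}(P_X,P_{Y|X})$, we have $$\eta_{\chi^2}\le\eta_{\mathrm{KL}}\le \frac{2\,\eta_{\chi^2}}{\phi\!\left(\max_{A\subseteq\mathcal{X}}\min\{P_X(A),1-P_X(A)\}\right)\min_{x\in\mathcal{X}}P_X(x)},$$ where $\phi:[0,\tfrac12]\to\mathbb{R}$ is given by $\phi(p)=\frac{1}{1-2p}\log\frac{1-p}{p}$ for $p\in[0,\tfrac12)$ and $\phi(\tfrac12)=2$.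
   Context: $P_X(A)=\sum_{x\in A}P_X(x)$. Let $W$ be the column stochastic matrix of the channel $P_{Y|X}$ (its $x$th column is $P_{Y|X=x}$), mapping a pmf $R_X$ on $\mathcal{X}$ to $WR_X$. The KL divergence is $D(R_X\|P_X)=\sum_x R_X(x)\log(R_X(x)/P_X(x))$ (natural log), and $\chi^2(R_X\|P_X)=\sum_x (R_X(x)-P_X(x))^2/P_X(x)$. For $D_\bullet\in\{D,\chi^2\}$, the contraction coefficient is $\eta_\bullet(P_X,P_{Y|X})=\sup\{D_\bullet(WR_X\|WP_X)/D_\bullet(R_X\|P_X): R_X \text{ a pmf on } \mathcal{X},\ 0<D_\bullet(R_X\|P_X)<\infty\}$; $\eta_{\mathrm{KL}}$ uses KL divergence and $\eta_{\chi^2}$ uses $\chi^2$-divergence. *)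

From HB Require Import structures.
From mathcomp Require Import all_boot all_order all_algebra.
From mathcomp Require Import all_classical all_reals exp.
Set Implicit Arguments. Unset Strict Implicit. Unset Printing Implicit Defensive.
Import Order.TTheory GRing.Theory Num.Theory.
Local Open Scope ring_scope.
Local Open Scope classical_set_scope.

Section Defs.
Variables (R : realType) (X Y : finType).

Definition is_pmf (T : finType) (p : T -> R) : Prop :=
  (forall t, 0 <= p t) /\ \sum_t p t = 1.

Definition marg1 (P : X * Y -> R) (x : X) : R := \sum_y P (x, y).
Definition marg2 (P : X * Y -> R) (y : Y) : R := \sum_x P (x, y).

Definition probset (T : finType) (p : T -> R) (A : {set T}) : R :=
  \sum_(t in A) p t.

(* the channel P_{Y|X}: W y x = P_{Y|X=x}(y) *)
Definition chan (P : X * Y -> R) (y : Y) (x : X) : R := P (x, y) / marg1 P x.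

Definition chan_apply (W : Y -> X -> R) (r : X -> R) (y : Y) : R :=
  \sum_x W y x * r x.

End Defs.

Definition KL (R : realType) (T : finType) (r p : T -> R) : R :=
  \sum_t (if r t == 0 then 0 else r t * ln (r t / p t)).

Definition chi2 (R : realType) (T : finType) (r p : T -> R) : R :=
  \sum_t (r t - p t) ^+ 2 / p t.

(* contraction coefficient for a divergence Dv (all divergences here are
   finite since p has full support) *)
Definition contraction (R : realType) (X Y : finType)
    (Dv : forall T : finType, (T -> R) -> (T -> R) -> R)
    (p : X -> R) (W : Y -> X -> R) : R :=
  sup [set t : R | exists r : X -> R,
         is_pmf r /\ 0 < Dv X r p /\
         t = Dv Y (chan_apply W r) (chan_apply W p) / Dv X r p].

Definition eta_KL (R : realType) (X Y : finType) (p : X -> R) (W : Y -> X -> R) :=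
  contraction (@KL R) p W.
Definition eta_chi2 (R : realType) (X Y : finType) (p : X -> R) (W : Y -> X -> R) :=
  contraction (@chi2 R) p W.

Definition phi (R : realType) (p : R) : R :=
  if p == 2^-1 then 2 else ln ((1 - p) / p) / (1 - 2 * p).

(* Lower bound: perturbing P_X to P_X + eps (R_X - P_X), both KL divergences are
   eps^2 / 2 times the corresponding chi^2 divergences up to O(eps^3), so every chi^2
   ratio is at most eta_KL.
   Upper bound: KL <= chi^2 at the output, then the chi^2 contraction, and finally
   chi^2(R || P) <= |R - P|_1^2 / (2 min P) <= 2 KL(R || P) / (phi(pi) min P) by the
   distribution-dependent Pinsker inequality phi(pi) |R - P|_1^2 <= 4 KL(R || P) of
   Ordentlich and Weinberger.  The latter reduces to two-point distributions by the
   log-sum inequality, where it follows from a sign analysis of the derivatives of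
   q |-> KL(q || p) - phi(p) (q - p)^2. *)

From Pilot Require Import Defs.
From HB Require Import structures.
From mathcomp Require Import all_boot all_order all_algebra.
From mathcomp Require Import all_classical all_reals exp.
From mathcomp Require Import normedtype derive realfun.
From mathcomp Require Import ring lra.
Import Order.TTheory GRing.Theory Num.Theory numFieldNormedType.Exports.
Local Open Scope ring_scope.

Section RealAnalysis.
Context {R : realType}.
Implicit Types (a b c d e t u : R).

Lemma derive_ge0_le (f df : R -> R) a b :
  (forall x, a <= x <= b -> is_derive x 1 f (df x)) ->
  (forall x, a <= x <= b -> 0 <= df x) -> a <= b -> f a <= f b.
Proof.
move=> f_df df_ge0 ab.
have inI x : x \in `]a, b[ -> a <= x <= b by rewrite in_itv /= => /andP[/ltW -> /ltW ->].
apply: (@ger0_derive1_le_cc R f a b); rewrite ?in_itv /= ?lexx ?ab //.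
- by move=> x /inI /f_df [].
- move=> x /inI xI; have := f_df x xI => ?.
  by rewrite derive1E derive_val; exact: df_ge0.
- apply: derivable_within_continuous => x; rewrite in_itv /= => xI.
  by have [] := f_df x xI.
Qed.

Lemma derive_le0_ge (f df : R -> R) a b :
  (forall x, a <= x <= b -> is_derive x 1 f (df x)) ->
  (forall x, a <= x <= b -> df x <= 0) -> a <= b -> f b <= f a.
Proof.
move=> f_df df_le0 ab; rewrite -lerN2.
apply: (@derive_ge0_le (fun x => - f x) (fun x => - df x)) => // x xI.
  by have := f_df x xI => ?; exact: is_deriveN.
by rewrite oppr_ge0 df_le0.
Qed.

Lemma le_of_le_add_small a b c d :
  0 < d -> (forall e, 0 < e < d -> a <= b + e * c) -> a <= b.
Proof.
move=> d_gt0 h; apply/ler_addgt0Pr => k k_gt0.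
set e := Num.min (d / 2) (k / (`|c| + 1)).
have c1_gt0 : 0 < `|c| + 1 by have := normr_ge0 c; lra.
have e_gt0 : 0 < e by rewrite lt_min !divr_gt0 //; lra.
have e_le : e <= k / (`|c| + 1) by rewrite ge_min lexx orbT.
have ec_le : e * c <= k.
  apply: le_trans (ler_wpM2l (ltW e_gt0) (ler_norm c)) _.
  rewrite ler_pdivlMr // in e_le.
  have := normr_ge0 c; nra.
apply: le_trans (h e _) _; last by rewrite lerD2l.
by rewrite e_gt0 /= gt_min; apply/orP; left; lra.
Qed.

Lemma ln_sub_pade_le u v : 0 < u <= v ->
  ln u - 2 * (u - 1) / (u + 1) <= ln v - 2 * (v - 1) / (v + 1).
Proof.
move=> /andP[u_gt0 uv].
have pade_eq w : 0 < w -> ln w - 2 * (w - 1) / (w + 1) = ln w - 2 + 4 * (w + 1)^-1.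
  by move=> w_gt0; field; rewrite gt_eqF //; lra.
rewrite !pade_eq //; last lra.
apply: (@derive_ge0_le (fun w => ln w - 2 + 4 * (w + 1)^-1)
  (fun w => w^-1 - 4 / (w + 1) ^+ 2)) => // w /andP[uw _].
- have w_gt0 : 0 < w by lra.
  have := @is_derive1_ln R w w_gt0 => ?.
  have : is_derive w 1 (fun v : R => (v + 1)^-1) (- (w + 1) ^- 2 *: 1).
    apply: is_deriveV; first by rewrite gt_eqF //; lra.
    by apply: trigger_derive; rewrite addr0.
  move=> ?; apply: trigger_derive.
  by rewrite /GRing.scale /= mulr1 subr0; ring.
- have w_gt0 : 0 < w by lra.
  have -> : w^-1 - 4 / (w + 1) ^+ 2 = (w - 1) ^+ 2 / (w * (w + 1) ^+ 2).
    by field; rewrite !gt_eqF //; lra.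
  by rewrite divr_ge0 ?sqr_ge0 // mulr_ge0 ?sqr_ge0 // ltW.
Qed.

Lemma ln_ge_pade u : 1 <= u -> 2 * (u - 1) / (u + 1) <= ln u.
Proof.
move=> u_ge1; have := @ln_sub_pade_le 1 u ltac:(lra).
by rewrite ln1 subrr mulr0 mul0r subr0 subr_ge0.
Qed.

Lemma ln_le_pade u : 0 < u <= 1 -> ln u <= 2 * (u - 1) / (u + 1).
Proof.
move=> uI; have := @ln_sub_pade_le u 1 uI.
by rewrite ln1 subrr mulr0 mul0r subr0 subr_le0.
Qed.

Lemma halfdiff_sub_ln_le u v : 0 < u <= v ->
  (u - u^-1) / 2 - ln u <= (v - v^-1) / 2 - ln v.
Proof.
move=> /andP[u_gt0 uv].
apply: (@derive_ge0_le (fun w => (w - w^-1) / 2 - ln w)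
  (fun w => (1 + w ^- 2) / 2 - w^-1)) => // w /andP[uw _].
- have w_gt0 : 0 < w by lra.
  have := @is_derive1_ln R w w_gt0 => ?.
  have : is_derive w 1 (fun v : R => v^-1) (- w ^- 2 *: 1).
    by apply: is_deriveV; rewrite gt_eqF.
  move=> ?; apply: trigger_derive.
  by rewrite /GRing.scale /= ?mulr1; field; rewrite gt_eqF.
- have w_gt0 : 0 < w by lra.
  have -> : (1 + w ^- 2) / 2 - w^-1 = (w - 1) ^+ 2 / (2 * w ^+ 2).
    by field; rewrite gt_eqF.
  by rewrite divr_ge0 ?sqr_ge0 // mulr_ge0 ?sqr_ge0.
Qed.

Lemma ln_le_halfdiff u : 1 <= u -> ln u <= (u - u^-1) / 2.
Proof.
move=> u_ge1; have := @halfdiff_sub_ln_le 1 u ltac:(lra).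
by rewrite ln1 invr1 subrr mul0r subr0 subr_ge0.
Qed.

Lemma ln_ge_halfdiff u : 0 < u <= 1 -> (u - u^-1) / 2 <= ln u.
Proof.
move=> uI; have := @halfdiff_sub_ln_le u 1 uI.
by rewrite ln1 invr1 subrr mul0r subr0 subr_le0.
Qed.

Lemma xlnx_taylor t : -1 <= t ->
  `|(1 + t) * ln (1 + t) - (t + t ^+ 2 / 2)| <= `|t| ^+ 3 / 2.
Proof.
move=> t_ge; rewrite ler_distl.
have [->|t_neq] := eqVneq t (-1).
  by rewrite subrr ln0 // mulr0 normrN normr1 expr1n; apply/andP; split; lra.
have t_gt : -1 < t by rewrite lt_neqAle eq_sym t_neq.
have u_gt0 : 0 < 1 + t by lra.
have half_eq : (1 + t) * ((1 + t - (1 + t)^-1) / 2) = t + t ^+ 2 / 2.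
  by field; rewrite gt_eqF.
have pade_eq : (1 + t) * (2 * (1 + t - 1) / (1 + t + 1)) = 2 * t * (1 + t) / (2 + t).
  by field; rewrite gt_eqF //; lra.
have t2_gt0 : 0 < 2 + t by lra.
have [t_ge0|t_lt0] := leP 0 t.
- rewrite ger0_norm //; apply/andP; split.
  + have := ler_wpM2l (ltW u_gt0) (ln_ge_pade (1 + t) ltac:(lra)).
    rewrite pade_eq; apply: le_trans.
    by rewrite ler_pdivlMr //; nra.
  + have := ler_wpM2l (ltW u_gt0) (ln_le_halfdiff (1 + t) ltac:(lra)).
    rewrite half_eq => /le_trans; apply.
    by rewrite lerDl divr_ge0 // exprn_ge0.
- rewrite ltr0_norm //; apply/andP; split.
  + have := ler_wpM2l (ltW u_gt0) (ln_ge_halfdiff (1 + t) ltac:(lra)).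
    rewrite half_eq; apply: le_trans.
    by rewrite gerDl oppr_le0 divr_ge0 // exprn_ge0 // oppr_ge0 ltW.
  + have := ler_wpM2l (ltW u_gt0) (ln_le_pade (1 + t) ltac:(lra)).
    rewrite pade_eq => /le_trans; apply.
    by rewrite ler_pdivrMr //; nra.
Qed.

End RealAnalysis.

Section Divergences.
Context {R : realType} {T : finType}.
Implicit Types (a b d p q r : T -> R) (e m : R).

(* Tangent-line bound [ln z <= z - 1] at [z = k * b / a]. *)
Lemma mul_ln_div_ge (a b k : R) : 0 <= a -> 0 < b -> 0 < k ->
  a * ln k + a - k * b <= a * ln (a / b).
Proof.
move=> a_ge0 b_gt0 k_gt0; have [->|a_neq0] := eqVneq a 0.
  by rewrite !mul0r !add0r oppr_le0 mulr_ge0 // ltW.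
have a_gt0 : 0 < a by rewrite lt_neqAle eq_sym a_neq0.
have kba_gt0 : 0 < k * b / a by rewrite divr_gt0 // mulr_gt0.
have ln_ab : ln (a / b) = ln k - ln (k * b / a).
  by rewrite !ln_div ?posrE ?mulr_gt0 // lnM ?posrE //; ring.
have := @le_ln1Dx R (k * b / a - 1) ltac:(lra); rewrite addrC subrK.
move=> /(ler_wpM2l a_ge0).
have -> : a * (k * b / a - 1) = k * b - a by field; rewrite gt_eqF.
rewrite ln_ab mulrBr; lra.
Qed.

Lemma log_sum_le (P : pred T) a b :
  (forall x, 0 <= a x) -> (forall x, 0 < b x) -> 0 < \sum_(x | P x) b x ->
  (\sum_(x | P x) a x) * ln ((\sum_(x | P x) a x) / (\sum_(x | P x) b x))
    <= \sum_(x | P x) a x * ln (a x / b x).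
Proof.
move=> a_ge0 b_gt0 B_gt0.
set A := \sum_(x | P x) a x; set B := \sum_(x | P x) b x.
have [A0|A_neq0] := eqVneq A 0.
  rewrite A0 mul0r; apply: sumr_ge0 => x Px.
  by rewrite (psumr_eq0P (fun i _ => a_ge0 i) A0 Px) mul0r.
have A_gt0 : 0 < A by rewrite lt_neqAle eq_sym A_neq0 sumr_ge0.
have k_gt0 : 0 < A / B by rewrite divr_gt0.
apply: le_trans (_ : _ <= \sum_(x | P x) (a x * ln (A / B) + a x - A / B * b x)) _.
  rewrite big_split /= big_split /= -mulr_suml sumrN -mulr_sumr -/A -/B.
  by rewrite divfK ?gt_eqF //; lra.
by apply: ler_sum => x _; apply: mul_ln_div_ge.
Qed.

Lemma KLE r p : KL r p = \sum_x r x * ln (r x / p x).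
Proof. by apply: eq_bigr => x _; case: eqP => [->|//]; rewrite mul0r. Qed.

Lemma KL_ge0 r p : (forall x, 0 < p x) -> (forall x, 0 <= r x) ->
  \sum_x r x = 1 -> \sum_x p x = 1 -> 0 <= KL r p.
Proof.
move=> p_gt0 r_ge0 r_sum p_sum; rewrite KLE.
have := @log_sum_le predT r p r_ge0 p_gt0 ltac:(by rewrite p_sum).
by rewrite r_sum p_sum divr1 ln1 mulr0.
Qed.

Lemma full_support_lt1 p : (2 <= #|T|)%N -> (forall x, 0 < p x) -> \sum_x p x = 1 ->
  forall x, p x < 1.
Proof.
move=> T_gt1 p_gt0 p_sum x0; have [x1 x10] : exists x1, x1 != x0.
  have [y [z [_ _ yz]]] : exists y z, [/\ y \in T, z \in T & y != z] by exact/card_gt1P.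
  by have [<-|] := eqVneq y x0; [exists z; rewrite eq_sym | exists y].
move: p_sum; rewrite (bigD1 x0) //= (bigD1 x1) //=.
have : 0 <= \sum_(x | (x != x0) && (x != x1)) p x by apply: sumr_ge0 => x _; exact: ltW.
by have := p_gt0 x1; lra.
Qed.

Lemma chi2_ge0 r p : (forall x, 0 < p x) -> 0 <= chi2 r p.
Proof. by move=> p_gt0; apply: sumr_ge0 => x _; rewrite divr_ge0 ?sqr_ge0 ?ltW. Qed.

Lemma KL_le_chi2 r p : (forall x, 0 < p x) -> (forall x, 0 <= r x) ->
  \sum_x r x = \sum_x p x -> KL r p <= chi2 r p.
Proof.
move=> p_gt0 r_ge0 rp_sum; rewrite KLE.
apply: le_trans (_ : _ <= \sum_x ((r x - p x) ^+ 2 / p x + (r x - p x))) _.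
  apply: ler_sum => x _; have p_neq0 : p x != 0 by rewrite gt_eqF.
  have [->|r_neq0] := eqVneq (r x) 0.
    by rewrite mul0r sub0r sqrrN expr2 mulfK // addrN.
  have r_gt0 : 0 < r x by rewrite lt_neqAle eq_sym r_neq0 r_ge0.
  have rp_gt0 : 0 < r x / p x by rewrite divr_gt0.
  have := @le_ln1Dx R (r x / p x - 1) ltac:(lra).
  rewrite addrC subrK => /(ler_wpM2l (r_ge0 x)).
  by have -> : r x * (r x / p x - 1) = (r x - p x) ^+ 2 / p x + (r x - p x) by field.
by rewrite big_split /= sumrB rp_sum subrr addr0.
Qed.

Definition mix q r e : T -> R := fun x => q x + e * (r x - q x).

Lemma mix_ge0 q r e : (forall x, 0 <= q x) -> (forall x, 0 <= r x) -> 0 <= e <= 1 ->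
  forall x, 0 <= mix q r e x.
Proof.
move=> q_ge0 r_ge0 eI x; have := q_ge0 x; have := r_ge0 x.
by rewrite /mix; nra.
Qed.

Lemma sum_mix q r e : \sum_x r x = \sum_x q x -> \sum_x mix q r e x = \sum_x q x.
Proof. by move=> rq_sum; rewrite big_split /= -mulr_sumr sumrB rq_sum subrr mulr0 addr0. Qed.

Definition cubic_dev r q := \sum_x `|r x - q x| ^+ 3 / q x ^+ 2.

Lemma cubic_dev_ge0 r q : (forall x, 0 < q x) -> 0 <= cubic_dev r q.
Proof. by move=> q_gt0; apply: sumr_ge0 => x _; rewrite divr_ge0 // exprn_ge0 // ltW. Qed.

Lemma KL_mix_taylor q r e : (forall x, 0 < q x) -> (forall x, 0 <= r x) ->
  \sum_x r x = \sum_x q x -> 0 <= e <= 1 ->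
  `|KL (mix q r e) q - e ^+ 2 / 2 * chi2 r q| <= e ^+ 3 / 2 * cubic_dev r q.
Proof.
move=> q_gt0 r_ge0 rq_sum eI.
have mix_ge0 := @mix_ge0 q r e (fun x => ltW (q_gt0 x)) r_ge0 eI.
have lin0 : \sum_x e * (r x - q x) = 0 by rewrite -mulr_sumr sumrB rq_sum subrr mulr0.
have quad_eq : e ^+ 2 / 2 * chi2 r q
    = \sum_x (e * (r x - q x) + e ^+ 2 / 2 * ((r x - q x) ^+ 2 / q x)).
  by rewrite big_split /= lin0 add0r /chi2 mulr_sumr.
rewrite KLE quad_eq -sumrB /cubic_dev mulr_sumr.
apply: le_trans (ler_norm_sum _ _ _) _; apply: ler_sum => x _.
have q_neq0 : q x != 0 by rewrite gt_eqF.
set t := e * (r x - q x) / q x.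
have t_ge : -1 <= t.
  have := mix_ge0 x; rewrite /mix /t ler_pdivlMr // => ?; lra.
have -> : mix q r e x * ln (mix q r e x / q x)
    - (e * (r x - q x) + e ^+ 2 / 2 * ((r x - q x) ^+ 2 / q x))
    = q x * ((1 + t) * ln (1 + t) - (t + t ^+ 2 / 2)).
  by rewrite /mix /t (_ : (q x + e * (r x - q x)) / q x = 1 + e * (r x - q x) / q x); field.
rewrite normrM gtr0_norm //.
apply: le_trans (ler_wpM2l (ltW (q_gt0 x)) (xlnx_taylor _ t_ge)) _.
rewrite /t !normrM normfV (gtr0_norm (q_gt0 x)) (@ger0_norm _ e); last lra.
by rewrite (_ : q x * _ = e ^+ 3 / 2 * (`|r x - q x| ^+ 3 / q x ^+ 2)) //; field.
Qed.

Lemma sum_eq0_normr_le d : \sum_x d x = 0 -> forall x, 2 * `|d x| <= \sum_y `|d y|.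
Proof.
move=> d_sum x; have rest : \sum_(y | y != x) d y = - d x.
  by move: d_sum; rewrite (bigD1 x) //= => /eqP; rewrite addrC addr_eq0 => /eqP.
rewrite (bigD1 x) //=; have : `|d x| <= \sum_(y | y != x) `|d y|.
  by rewrite -normrN -rest; exact: ler_norm_sum.
lra.
Qed.

Lemma chi2_le_l1 r p m : 0 < m -> (forall x, m <= p x) -> \sum_x r x = \sum_x p x ->
  chi2 r p <= (\sum_x `|r x - p x|) ^+ 2 / (2 * m).
Proof.
move=> m_gt0 m_le rp_sum; set S := \sum_x `|r x - p x|.
have d_sum : \sum_x (r x - p x) = 0 by rewrite sumrB rp_sum subrr.
have half_le x : `|r x - p x| <= S / 2.
  by have := @sum_eq0_normr_le (fun x => r x - p x) d_sum x; rewrite -/S; lra.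
apply: le_trans (_ : _ <= \sum_x `|r x - p x| * (S / 2) / m) _.
  apply: ler_sum => x _; rewrite -real_normK ?num_real // expr2.
  have p_gt0 : 0 < p x := lt_le_trans m_gt0 (m_le x).
  apply: ler_pM.
  - exact: mulr_ge0.
  - by rewrite invr_ge0 ltW.
  - exact: ler_wpM2l.
  - by rewrite lef_pV2 ?posrE.
by rewrite -!mulr_suml -/S invfM !mulrA expr2.
Qed.

Lemma sqr_sum_le (c d : T -> R) : (forall x, 0 <= c x) ->
  (\sum_x c x * d x) ^+ 2 <= (\sum_x c x * d x ^+ 2) * \sum_x c x.
Proof.
move=> c_ge0.
have sq_l : (\sum_x c x * d x ^+ 2) * \sum_x c x = \sum_x \sum_y c x * c y * d x ^+ 2.
  by rewrite big_distrlr /=; apply: eq_bigr => x _; apply: eq_bigr => y _; ring.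
have sq_r : (\sum_x c x * d x ^+ 2) * \sum_x c x = \sum_x \sum_y c x * c y * d y ^+ 2.
  by rewrite mulrC big_distrlr /=; apply: eq_bigr => x _; apply: eq_bigr => y _; ring.
have cross : (\sum_x c x * d x) ^+ 2 = \sum_x \sum_y c x * c y * (d x * d y).
  by rewrite expr2 big_distrlr /=; apply: eq_bigr => x _; apply: eq_bigr => y _; ring.
have : 0 <= \sum_x \sum_y c x * c y * (d x - d y) ^+ 2.
  by do 2![apply: sumr_ge0 => ? _]; rewrite mulr_ge0 ?sqr_ge0 ?mulr_ge0.
have -> : \sum_x \sum_y c x * c y * (d x - d y) ^+ 2
    = \sum_x \sum_y c x * c y * d x ^+ 2 + \sum_x \sum_y c x * c y * d y ^+ 2
      - 2 * \sum_x \sum_y c x * c y * (d x * d y).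
  rewrite mulr_sumr -big_split -sumrB; apply: eq_bigr => x _.
  by rewrite mulr_sumr -big_split -sumrB; apply: eq_bigr => y _ /=; ring.
by rewrite -sq_l -sq_r -cross; lra.
Qed.

End Divergences.

Section Phi.
Context {R : realType}.
Implicit Types (m p q u v : R).

Definition phi_odds u := ln u * (1 + 2 * (u - 1)^-1).

Lemma phi_odds_le u v : 1 < u <= v -> phi_odds u <= phi_odds v.
Proof.
move=> /andP[u_gt1 uv].
apply: (@derive_ge0_le _ phi_odds
  (fun w => w^-1 * (1 + 2 * (w - 1)^-1) - ln w * (2 * (w - 1) ^- 2))) => // w.
- move=> /andP[uw _]; have w_gt1 : 1 < w by lra.
  have := @is_derive1_ln R w ltac:(lra) => ?.
  have : is_derive w 1 (fun v : R => (v - 1)^-1) (- (w - 1) ^- 2 *: 1).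
    apply: is_deriveV; first by rewrite gt_eqF //; lra.
    by apply: trigger_derive; rewrite subr0.
  move=> ?; rewrite /phi_odds; apply: trigger_derive.
  by rewrite /GRing.scale /= ?mulr1; ring.
- move=> /andP[uw _]; have w_gt1 : 1 < w by lra.
  have -> : w^-1 * (1 + 2 * (w - 1)^-1) - ln w * (2 * (w - 1) ^- 2)
      = 2 * ((w - w^-1) / 2 - ln w) / (w - 1) ^+ 2.
    by field; rewrite !gt_eqF //; lra.
  rewrite divr_ge0 ?sqr_ge0 // mulr_ge0 // subr_ge0.
  by apply: ln_le_halfdiff; lra.
Qed.

Lemma phi_phi_odds m : 0 < m < 2^-1 -> phi m = phi_odds ((1 - m) / m).
Proof.
move=> mI; rewrite /phi /phi_odds ifF; last by rewrite lt_eqF //; lra.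
have m_neq0 : m != 0 by rewrite gt_eqF //; lra.
have -> : (1 - m) / m - 1 = (1 - 2 * m) / m by field.
by rewrite invf_div; congr (_ * _); field; rewrite gt_eqF //; lra.
Qed.

Lemma phi_ge2 m : 0 < m <= 2^-1 -> 2 <= phi m.
Proof.
move=> mI; rewrite /phi; case: ifPn => [_|m_neq]; first lra.
have m_lt : m < 2^-1 by rewrite lt_neqAle m_neq; lra.
have := @ln_ge_pade R ((1 - m) / m) ltac:(rewrite ler_pdivlMr; lra).
have -> : 2 * ((1 - m) / m - 1) / ((1 - m) / m + 1) = 2 * (1 - 2 * m).
  by field; rewrite !gt_eqF //; lra.
by rewrite ler_pdivlMr; lra.
Qed.

Lemma phi_le m p : 0 < m <= p -> p <= 2^-1 -> phi p <= phi m.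
Proof.
move=> mI p_le.
have [p_half|p_neq] := eqVneq p 2^-1.
  by rewrite {1}/phi p_half eqxx; apply: phi_ge2; lra.
have p_lt : p < 2^-1 by rewrite lt_neqAle p_neq.
rewrite !phi_phi_odds; try lra.
apply: phi_odds_le; apply/andP; split.
  by rewrite ltr_pdivlMr; lra.
rewrite ler_pdivlMr; last lra.
by rewrite mulrAC ler_pdivrMr; lra.
Qed.

Lemma phi_mul_ln_odds p : 0 < p <= 2^-1 -> phi p * (1 - 2 * p) = ln (1 - p) - ln p.
Proof.
move=> pI; rewrite /phi; case: ifPn => [/eqP ->|p_neq].
  by rewrite (_ : 1 - 2^-1 = 2^-1); [rewrite subrr; field | field].
have p_lt : p < 2^-1 by rewrite lt_neqAle p_neq; lra.
by rewrite ln_div ?posrE; [field; rewrite gt_eqF //; lra | lra | lra].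
Qed.

End Phi.

Section BinaryPinsker.
Context {R : realType}.
Implicit Types (c p q s x : R).

Definition pinsker_gap p c q :=
  q * (ln q - ln p) + (1 - q) * (ln (1 - q) - ln (1 - p)) - c * (q - p) ^+ 2.
Definition pinsker_gap' p c q :=
  ln q - ln (1 - q) - ln p + ln (1 - p) - 2 * c * (q - p).
Definition pinsker_gap'' c q := (q * (1 - q))^-1 - 2 * c.

Lemma is_derive_ln1B q : q < 1 -> is_derive q 1 (fun v : R => ln (1 - v)) (- (1 - q)^-1).
Proof.
move=> q_lt1.
have := @is_derive1_ln R (1 - q) ltac:(lra) => d_ln.
have d_1B : is_derive q 1 (fun v : R => 1 - v) (-1).
  by apply: trigger_derive; rewrite add0r mul1r.
by have := @is_derive1_comp R (@ln R) (fun v => 1 - v) q _ _ d_ln d_1B; rewrite mulrN1.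
Qed.

Lemma is_derive_pinsker_gap p c q :
  0 < q < 1 -> is_derive q 1 (pinsker_gap p c) (pinsker_gap' p c q).
Proof.
move=> qI; have := @is_derive1_ln R q ltac:(lra) => ?.
have := @is_derive_ln1B q ltac:(lra) => ?.
rewrite /pinsker_gap; apply: trigger_derive; rewrite /pinsker_gap' /GRing.scale /=.
by field; rewrite !gt_eqF //; lra.
Qed.

Lemma is_derive_pinsker_gap' p c q :
  0 < q < 1 -> is_derive q 1 (pinsker_gap' p c) (pinsker_gap'' c q).
Proof.
move=> qI; have := @is_derive1_ln R q ltac:(lra) => ?.
have := @is_derive_ln1B q ltac:(lra) => ?.
rewrite /pinsker_gap'; apply: trigger_derive; rewrite /pinsker_gap'' /GRing.scale /=.
by field; rewrite !gt_eqF //; lra.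
Qed.

Lemma pinsker_gap''_le c q s : 0 < q <= s -> s <= 2^-1 -> pinsker_gap'' c s <= pinsker_gap'' c q.
Proof. by move=> qs s_le; rewrite lerD2r lef_pV2 ?posrE; nra. Qed.

Lemma pinsker_gap'_id p c : pinsker_gap' p c p = 0.
Proof. by rewrite /pinsker_gap' subrr mulr0; ring. Qed.

(* [phi p] is exactly the constant making [pinsker_gap'] vanish at [1/2] too. *)
Lemma pinsker_gap'_half p : 0 < p <= 2^-1 -> pinsker_gap' p (phi p) 2^-1 = 0.
Proof.
move=> pI; rewrite /pinsker_gap' (_ : 1 - 2^-1 = 2^-1); last by field.
have -> : 2 * phi p * (2^-1 - p) = phi p * (1 - 2 * p) by field.
by rewrite phi_mul_ln_odds //; ring.
Qed.

Lemma pinsker_gap'_sym p q : 0 < p <= 2^-1 ->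
  pinsker_gap' p (phi p) (1 - q) = - pinsker_gap' p (phi p) q.
Proof.
move=> pI; rewrite /pinsker_gap' (_ : 1 - (1 - q) = q); last by ring.
have -> : 2 * phi p * (1 - q - p) = phi p * (1 - 2 * p) * 2 - 2 * phi p * (q - p).
  by ring.
by rewrite phi_mul_ln_odds //; ring.
Qed.

Lemma pinsker_gap''_root p : 0 < p <= 2^-1 ->
  exists2 s, p <= s <= 2^-1 & pinsker_gap'' (phi p) s = 0.
Proof.
move=> pI; have [p_half|p_neq] := eqVneq p 2^-1.
  exists 2^-1; first lra.
  by rewrite /pinsker_gap'' /phi p_half eqxx; field.
have p_lt : p < 2^-1 by rewrite lt_neqAle p_neq; lra.
have [s sI] : exists2 s, s \in `]p, 2^-1[ &
    pinsker_gap' p (phi p) 2^-1 - pinsker_gap' p (phi p) p = pinsker_gap'' (phi p) s * (2^-1 - p).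
  apply: MVT p_lt _ _ => [x|].
    by rewrite in_itv /= => /andP[? ?]; apply: is_derive_pinsker_gap'; lra.
  apply: derivable_within_continuous => x; rewrite in_itv /= => /andP[? ?].
  by have [] := @is_derive_pinsker_gap' p (phi p) x ltac:(lra).
move: sI; rewrite in_itv /= => /andP[ps s_lt].
rewrite pinsker_gap'_half // pinsker_gap'_id subrr => /esym /eqP.
rewrite mulf_eq0 => /orP[/eqP gap''_s|]; first by exists s; lra.
by rewrite subr_eq0 => /eqP; lra.
Qed.

Lemma pinsker_gap'_le0 p q : 0 < p <= 2^-1 -> 0 < q <= p -> pinsker_gap' p (phi p) q <= 0.
Proof.
move=> pI qI; have [s sI gap''_s] := pinsker_gap''_root p pI.
rewrite -(pinsker_gap'_id p (phi p)).
apply: (@derive_ge0_le _ _ (pinsker_gap'' (phi p))) => [x xI|x xI|]; last lra.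
  by apply: is_derive_pinsker_gap'; lra.
by rewrite -gap''_s; apply: pinsker_gap''_le; lra.
Qed.

Lemma pinsker_gap'_ge0 p q : 0 < p <= 2^-1 -> p <= q <= 2^-1 -> 0 <= pinsker_gap' p (phi p) q.
Proof.
move=> pI qI; have [s sI gap''_s] := pinsker_gap''_root p pI.
have [qs|sq] := leP q s.
  rewrite -(pinsker_gap'_id p (phi p)).
  apply: (@derive_ge0_le _ _ (pinsker_gap'' (phi p))) => [x xI|x xI|]; last lra.
    by apply: is_derive_pinsker_gap'; lra.
  by rewrite -gap''_s; apply: pinsker_gap''_le; lra.
rewrite -(pinsker_gap'_half p pI).
apply: (@derive_le0_ge _ _ (pinsker_gap'' (phi p))) => [x xI|x xI|]; last lra.
  by apply: is_derive_pinsker_gap'; lra.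
by rewrite -gap''_s; apply: pinsker_gap''_le; lra.
Qed.

(* [pinsker_gap] vanishes at [p] and [1 - p]; its derivative is [<= 0] on [(0, p]] and
   [[1/2, 1 - p]], and [>= 0] on [[p, 1/2]] and [[1 - p, 1)] by the symmetry [q <-> 1 - q]. *)
Lemma pinsker_gap_ge0 p q : 0 < p <= 2^-1 -> 0 < q < 1 -> 0 <= pinsker_gap p (phi p) q.
Proof.
move=> pI qI; set c := phi p.
have gap'_sym x : pinsker_gap' p c x = - pinsker_gap' p c (1 - x).
  by have := pinsker_gap'_sym p (1 - x) pI; rewrite (_ : 1 - (1 - x) = x) //; ring.
have gap_p : pinsker_gap p c p = 0 by rewrite /pinsker_gap !subrr; ring.
have gap_1Bp : pinsker_gap p c (1 - p) = 0.
  rewrite /pinsker_gap (_ : 1 - (1 - p) = p); last by ring.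
  rewrite (_ : c * (1 - p - p) ^+ 2 = c * (1 - 2 * p) * (1 - 2 * p)); last by ring.
  by rewrite /c phi_mul_ln_odds //; ring.
have d_gap x : 0 < x < 1 -> is_derive x 1 (pinsker_gap p c) (pinsker_gap' p c x).
  exact: is_derive_pinsker_gap.
have [qp|pq] := leP q p.
  rewrite -gap_p; apply: (@derive_le0_ge _ _ (pinsker_gap' p c)) => [x xI|x xI|]; last lra.
    by apply: d_gap; lra.
  by apply: pinsker_gap'_le0; lra.
have [q_le|q_gt] := leP q 2^-1.
  rewrite -gap_p; apply: (@derive_ge0_le _ _ (pinsker_gap' p c)) => [x xI|x xI|]; last lra.
    by apply: d_gap; lra.
  by apply: pinsker_gap'_ge0; lra.
have [q_le1Bp|q_gt1Bp] := leP q (1 - p).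
  rewrite -gap_1Bp; apply: (@derive_le0_ge _ _ (pinsker_gap' p c)) => [x xI|x xI|]; last lra.
    by apply: d_gap; lra.
  by rewrite gap'_sym oppr_le0; apply: pinsker_gap'_ge0; lra.
rewrite -gap_1Bp; apply: (@derive_ge0_le _ _ (pinsker_gap' p c)) => [x xI|x xI|]; last lra.
  by apply: d_gap; lra.
by rewrite gap'_sym oppr_ge0; apply: pinsker_gap'_le0; lra.
Qed.

End BinaryPinsker.

Section Pinsker.
Context {R : realType}.
Implicit Types (d p q r pi : R).

Definition binKL q p := q * ln (q / p) + (1 - q) * ln ((1 - q) / (1 - p)).

Lemma binKL_sym q p : binKL (1 - q) (1 - p) = binKL q p.
Proof. by rewrite /binKL !subKr addrC. Qed.

Lemma binKL_ge_interior p q pi : 0 < p < 1 -> 0 < q < 1 ->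
  Num.min p (1 - p) <= pi -> pi <= 2^-1 -> phi pi * (q - p) ^+ 2 <= binKL q p.
Proof.
wlog p_le : p q / p <= 2^-1 => [base pI qI min_le pi_le|pI qI min_le pi_le].
  have [?|p_gt] := leP p 2^-1; first exact: base.
  rewrite -binKL_sym (_ : (q - p) ^+ 2 = (1 - q - (1 - p)) ^+ 2); last by ring.
  by apply: base; rewrite ?subKr 1?minC; lra.
have pi_ge : p <= pi by move: min_le; rewrite (min_idPl _); lra.
have gap := @pinsker_gap_ge0 _ p q ltac:(lra) qI.
have := ler_wpM2r (sqr_ge0 (q - p)) (phi_le p pi ltac:(lra) pi_le).
have -> : binKL q p = pinsker_gap p (phi p) q + phi p * (q - p) ^+ 2.
  by rewrite /binKL /pinsker_gap !ln_div ?posrE; [ring|lra..].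
lra.
Qed.

(* Log-sum inequality for the two-term decomposition [(1 - d) r + d p] over [(1 - d) p + d p]. *)
Lemma xlnx_mix_le r p d : 0 <= r -> 0 < p -> 0 < d < 1 ->
  (r + d * (p - r)) * ln ((r + d * (p - r)) / p) <= (1 - d) * (r * ln (r / p)).
Proof.
move=> r_ge0 p_gt0 dI.
set a := fun i : bool => if i then (1 - d) * r else d * p.
set b := fun i : bool => if i then (1 - d) * p else d * p.
have a_ge0 x : 0 <= a x by case: x; apply: mulr_ge0; lra.
have b_gt0 x : 0 < b x by case: x; apply: mulr_gt0; lra.
have := @log_sum_le R bool predT a b a_ge0 b_gt0; rewrite /= !big_bool /a /b /=.
have -> : (1 - d) * p + d * p = p by ring.
have -> : (1 - d) * r + d * p = r + d * (p - r) by ring.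
have -> : (1 - d) * r / ((1 - d) * p) = r / p by field; rewrite !gt_eqF //; lra.
rewrite divff ?gt_eqF ?mulr_gt0 //; last lra.
by rewrite ln1 mulr0 addr0 mulrA; apply.
Qed.

Lemma binKL_ge p q pi : 0 < p < 1 -> 0 <= q <= 1 ->
  Num.min p (1 - p) <= pi -> pi <= 2^-1 -> phi pi * (q - p) ^+ 2 <= binKL q p.
Proof.
move=> pI qI min_le pi_le; set X := phi pi * (q - p) ^+ 2.
apply: (@le_of_le_add_small _ _ _ X 1) => // d dI.
set qd := q + d * (p - q).
have qdI : 0 < qd < 1 by apply/andP; split; rewrite /qd; nra.
have smooth : binKL qd p <= (1 - d) * binKL q p.
  have := @xlnx_mix_le q p d ltac:(lra) ltac:(lra) dI.
  have := @xlnx_mix_le (1 - q) (1 - p) d ltac:(lra) ltac:(lra) dI.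
  by rewrite /binKL /qd (_ : 1 - q + d * (1 - p - (1 - q)) = 1 - (q + d * (p - q))); [lra|ring].
have := le_trans (binKL_ge_interior p qd pi pI qdI min_le pi_le) smooth.
rewrite (_ : phi pi * (qd - p) ^+ 2 = (1 - d) * ((1 - d) * X)); last by rewrite /X /qd; ring.
by rewrite ler_pM2l; lra.
Qed.

End Pinsker.

Section PinskerFinite.
Context {R : realType} {T : finType}.
Implicit Types (p r : T -> R) (A : {set T}).

Lemma probset_setC p A : \sum_(x | x \notin A) p x = \sum_x p x - probset p A.
Proof. by rewrite [\sum_x p x](bigID (mem A)) /= addrC addrK. Qed.

Lemma binKL_le_KL p r A : (forall x, 0 < p x) -> is_pmf r -> \sum_x p x = 1 ->
  0 < probset p A < 1 -> binKL (probset r A) (probset p A) <= KL r p.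
Proof.
move=> p_gt0 [r_ge0 r_sum] p_sum pAI.
have in_le := @log_sum_le R T (mem A) r p r_ge0 p_gt0 ltac:(rewrite /probset in pAI; lra).
have out_le := @log_sum_le R T (predC (mem A)) r p r_ge0 p_gt0.
rewrite /= (probset_setC p) (probset_setC r) p_sum r_sum in out_le.
rewrite KLE (bigID (mem A)) /= /binKL.
by apply: lerD; [exact: in_le | apply: out_le; lra].
Qed.

Lemma sum_normrB_probset p r : \sum_x r x = \sum_x p x ->
  let A := [set x | p x <= r x] in
  \sum_x `|r x - p x| = 2 * (probset r A - probset p A).
Proof.
move=> rp_sum A; rewrite (bigID (mem A)) /=.
have -> : \sum_(x in A) `|r x - p x| = probset r A - probset p A.
  by rewrite -sumrB; apply: eq_bigr => x; rewrite inE => ?; rewrite ger0_norm ?subr_ge0.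
have -> : \sum_(x | x \notin A) `|r x - p x| = probset r A - probset p A.
  rewrite (_ : _ - _ = (\sum_x p x - probset p A) - (\sum_x r x - probset r A)).
    rewrite -!probset_setC -sumrB; apply: eq_bigr => x; rewrite inE -ltNge => ?.
    by rewrite ltr0_norm ?subr_lt0 // opprB.
  by rewrite rp_sum; ring.
by ring.
Qed.

Lemma pinsker_phi p r pi : (forall x, 0 < p x) -> \sum_x p x = 1 -> is_pmf r ->
  (forall A, Num.min (probset p A) (1 - probset p A) <= pi) -> pi <= 2^-1 ->
  phi pi * (\sum_x `|r x - p x|) ^+ 2 <= 4 * KL r p.
Proof.
move=> p_gt0 p_sum r_pmf pi_ge pi_le; have [r_ge0 r_sum] := r_pmf.
have rp_sum : \sum_x r x = \sum_x p x by rewrite r_sum p_sum.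
rewrite (sum_normrB_probset _ _ rp_sum).
set A := [set x | p x <= r x]; set a := probset p A; set q := probset r A.
have [qa|qa_neq] := eqVneq q a.
  by rewrite qa subrr mulr0 expr0n mulr0 mulr_ge0 // KL_ge0.
have q_le1 : q <= 1 by rewrite -r_sum [leRHS](bigID (mem A)) lerDl sumr_ge0.
have a_ge0 : 0 <= a by apply: sumr_ge0 => x _; exact: ltW.
have aq : a < q.
  rewrite lt_neqAle eq_sym qa_neq /=.
  have : 0 <= \sum_x `|r x - p x| by apply: sumr_ge0 => x _.
  by rewrite (sum_normrB_probset _ _ rp_sum) -/A -/a -/q; lra.
have a_gt0 : 0 < a.
  rewrite lt_neqAle eq_sym a_ge0 andbT; apply/eqP => a0.
  have pA0 := psumr_eq0P (fun x _ => ltW (p_gt0 x)) a0.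
  have : q = 0 by rewrite /q /probset big1 // => x /pA0 px0; have := p_gt0 x; lra.
  lra.
have aI : 0 < a < 1 by lra.
have le_KL := le_trans (binKL_ge a q pi aI ltac:(lra) (pi_ge A) pi_le)
  (binKL_le_KL p r A p_gt0 r_pmf p_sum aI).
by rewrite (_ : phi pi * _ = 4 * (phi pi * (q - a) ^+ 2)) ?ler_pM2l //; ring.
Qed.

Lemma chi2_le_KL p r pi m : (forall x, 0 < p x) -> \sum_x p x = 1 -> is_pmf r ->
  (forall A, Num.min (probset p A) (1 - probset p A) <= pi) -> 0 < pi <= 2^-1 ->
  0 < m -> (forall x, m <= p x) ->
  chi2 r p <= 2 / (phi pi * m) * KL r p.
Proof.
move=> p_gt0 p_sum r_pmf pi_ge piI m_gt0 m_le.
have phi_gt0 : 0 < phi pi by have := phi_ge2 pi piI; lra.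
have [_ r_sum] := r_pmf.
apply: le_trans (chi2_le_l1 r p m m_gt0 m_le _) _; first by rewrite r_sum p_sum.
have -> : 2 / (phi pi * m) * KL r p = 4 * KL r p / phi pi / (2 * m).
  by field; rewrite !gt_eqF.
rewrite ler_pM2r ?invr_gt0 ?mulr_gt0 // ler_pdivlMr // mulrC.
by apply: pinsker_phi => //; lra.
Qed.

End PinskerFinite.

(* [Defs.contraction], not [normedtype]'s [contraction] (contraction maps). *)
Section ContractionSup.
Context {R : realType} {X Y : finType}.
Variables (D : forall T : finType, (T -> R) -> (T -> R) -> R) (p : X -> R) (W : Y -> X -> R).

Lemma le_contraction k r :
  (forall r, is_pmf r -> 0 < D X r p ->
     D Y (chan_apply W r) (chan_apply W p) <= k * D X r p) ->
  is_pmf r -> 0 < D X r p ->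
  D Y (chan_apply W r) (chan_apply W p) <= Defs.contraction D p W * D X r p.
Proof.
move=> D_le r_pmf D_gt0; rewrite -ler_pdivrMr //.
apply: ub_le_sup; last by exists r.
by exists k => _ [r' [r'_pmf [D'_gt0 ->]]]; rewrite ler_pdivrMr // D_le.
Qed.

Lemma contraction_le k : (exists r, is_pmf r /\ 0 < D X r p) ->
  (forall r, is_pmf r -> 0 < D X r p ->
     D Y (chan_apply W r) (chan_apply W p) <= k * D X r p) ->
  Defs.contraction D p W <= k.
Proof.
move=> [r [r_pmf D_gt0]] D_le; apply: ge_sup.
  by exists (D Y (chan_apply W r) (chan_apply W p) / D X r p), r.
by move=> _ [r' [r'_pmf [D'_gt0 ->]]]; rewrite ler_pdivrMr // D_le.
Qed.

Lemma contraction_ge0 k : (exists r, is_pmf r /\ 0 < D X r p) ->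
  (forall r, is_pmf r -> 0 <= D Y (chan_apply W r) (chan_apply W p)) ->
  (forall r, is_pmf r -> 0 < D X r p ->
     D Y (chan_apply W r) (chan_apply W p) <= k * D X r p) ->
  0 <= Defs.contraction D p W.
Proof.
move=> [r [r_pmf D_gt0]] out_ge0 D_le.
rewrite -(ler_pM2r D_gt0) mul0r.
exact: le_trans (out_ge0 r r_pmf) (le_contraction _ _ D_le r_pmf D_gt0).
Qed.

End ContractionSup.

Section Channel.
Context {R : realType} {X Y : finType}.
Variables (p : X -> R) (W : Y -> X -> R).
Hypotheses (p_gt0 : forall x, 0 < p x) (p_sum : \sum_x p x = 1)
  (W_ge0 : forall y x, 0 <= W y x) (W_sum : forall x, \sum_y W y x = 1)
  (Wp_gt0 : forall y, 0 < chan_apply W p y).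

Lemma sum_chan_apply r : \sum_y chan_apply W r y = \sum_x r x.
Proof.
rewrite /chan_apply exchange_big /=; apply: eq_bigr => x _.
by rewrite -mulr_suml W_sum mul1r.
Qed.

Lemma chan_apply_pmf r : is_pmf r -> is_pmf (chan_apply W r).
Proof.
move=> [r_ge0 r_sum]; split; last by rewrite sum_chan_apply.
by move=> y; apply: sumr_ge0 => x _; exact: mulr_ge0.
Qed.

Lemma chan_apply_mix r e : chan_apply W (mix p r e) = mix (chan_apply W p) (chan_apply W r) e.
Proof.
apply/funext => y; rewrite /mix /chan_apply -sumrB mulr_sumr -big_split /=.
by apply: eq_bigr => x _; ring.
Qed.

Lemma chi2_chan_le r : chi2 (chan_apply W r) (chan_apply W p) <= chi2 r p.
Proof.
have term_le y : (chan_apply W r y - chan_apply W p y) ^+ 2 / chan_apply W p y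
    <= \sum_x W y x * ((r x - p x) ^+ 2 / p x).
  rewrite ler_pdivrMr //.
  have := @sqr_sum_le R X (fun x => W y x * p x) (fun x => (r x - p x) / p x)
    (fun x => mulr_ge0 (W_ge0 y x) (ltW (p_gt0 x))).
  have -> : \sum_x W y x * p x * ((r x - p x) / p x)
      = chan_apply W r y - chan_apply W p y.
    rewrite /chan_apply -sumrB; apply: eq_bigr => x _.
    by field; rewrite gt_eqF.
  congr (_ <= _ * _); apply: eq_bigr => x _.
  by field; rewrite gt_eqF.
apply: le_trans (ler_sum _ (fun y _ => term_le y)) _.
rewrite exchange_big /=; apply: ler_sum => x _.
by rewrite -mulr_suml W_sum mul1r.
Qed.

Lemma KL_chan_le_chi2 r : is_pmf r ->
  KL (chan_apply W r) (chan_apply W p) <= chi2 (chan_apply W r) (chan_apply W p).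
Proof.
move=> r_pmf; have [Wr_ge0 Wr_sum] := chan_apply_pmf r r_pmf.
by apply: KL_le_chi2 => //; rewrite Wr_sum sum_chan_apply p_sum.
Qed.

Lemma KL_chan_ge0 r : is_pmf r -> 0 <= KL (chan_apply W r) (chan_apply W p).
Proof.
move=> r_pmf; have [Wr_ge0 Wr_sum] := chan_apply_pmf r r_pmf.
by apply: KL_ge0 => //; rewrite sum_chan_apply.
Qed.

Hypothesis X_gt1 : (2 <= #|X|)%N.

Lemma exists_pmf_KL_gt0 : exists r, is_pmf r /\ 0 < KL r p.
Proof.
have /card_gt0P[x0 _] : (0 < #|X|)%N by apply: leq_trans X_gt1.
have px0_lt1 := full_support_lt1 p X_gt1 p_gt0 p_sum x0.
exists (fun x => (x == x0)%:R); split.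
  split=> [x|]; first by rewrite ler0n.
  by rewrite (bigD1 x0) //= eqxx big1 ?addr0 // => x /negbTE ->.
rewrite KLE (bigD1 x0) //= eqxx big1 ?addr0 => [|x /negbTE ->]; last by rewrite mul0r.
by rewrite mul1r div1r ln_gt0 // invf_gt1.
Qed.

Lemma exists_pmf_chi2_gt0 : exists r, is_pmf r /\ 0 < chi2 r p.
Proof.
have [r [[r_ge0 r_sum] KL_gt0]] := exists_pmf_KL_gt0.
exists r; split=> //; apply: lt_le_trans KL_gt0 _.
by apply: KL_le_chi2 => //; rewrite r_sum p_sum.
Qed.

Lemma eta_chi2_ge0 : 0 <= eta_chi2 p W.
Proof.
apply: (@contraction_ge0 _ _ _ _ _ _ 1) exists_pmf_chi2_gt0 _ _ => r r_pmf.
  exact: chi2_ge0.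
by rewrite mul1r => _; exact: chi2_chan_le.
Qed.

Lemma chi2_chan_le_eta r : is_pmf r -> 0 < chi2 r p ->
  chi2 (chan_apply W r) (chan_apply W p) <= eta_chi2 p W * chi2 r p.
Proof. by apply: (@le_contraction _ _ _ _ _ _ 1) => r' _ _; rewrite mul1r chi2_chan_le. Qed.

Variable k : R.
Hypothesis chi2_le_KL : forall r, is_pmf r -> chi2 r p <= k * KL r p.

Lemma eta_KL_le : eta_KL p W <= k * eta_chi2 p W.
Proof.
apply: contraction_le exists_pmf_KL_gt0 _ => r r_pmf KL_gt0.
have chi2_gt0 : 0 < chi2 r p.
  have [r_ge0 r_sum] := r_pmf.
  by apply: lt_le_trans KL_gt0 _; apply: KL_le_chi2 => //; rewrite r_sum p_sum.
apply: le_trans (KL_chan_le_chi2 r r_pmf) _.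
apply: le_trans (chi2_chan_le_eta r r_pmf chi2_gt0) _.
by rewrite [k * _]mulrC -mulrA; apply: ler_wpM2l; [exact: eta_chi2_ge0 | exact: chi2_le_KL].
Qed.

Lemma KL_chan_le r : is_pmf r -> KL (chan_apply W r) (chan_apply W p) <= k * KL r p.
Proof.
move=> r_pmf; apply: le_trans (KL_chan_le_chi2 r r_pmf) _.
exact: le_trans (chi2_chan_le r) (chi2_le_KL r r_pmf).
Qed.

Lemma KL_chan_le_eta r : is_pmf r -> 0 < KL r p ->
  KL (chan_apply W r) (chan_apply W p) <= eta_KL p W * KL r p.
Proof. by apply: (@le_contraction _ _ _ _ _ _ k) => r' r'_pmf _; exact: KL_chan_le. Qed.

Lemma eta_KL_ge0 : 0 <= eta_KL p W.
Proof.
apply: (@contraction_ge0 _ _ _ _ _ _ k) exists_pmf_KL_gt0 KL_chan_ge0 _ => r r_pmf _.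
exact: KL_chan_le.
Qed.

(* Apply the [KL] contraction to [mix p r eps]: both [KL] divergences are [eps^2 / 2] times
   the corresponding [chi2] divergences up to the cubic remainders of [KL_mix_taylor]. *)
Lemma chi2_chan_le_eta_KL_add r eps : is_pmf r -> 0 < eps < 1 -> eps * cubic_dev r p < chi2 r p ->
  chi2 (chan_apply W r) (chan_apply W p) <= eta_KL p W * chi2 r p
    + eps * (cubic_dev (chan_apply W r) (chan_apply W p) + eta_KL p W * cubic_dev r p).
Proof.
move=> r_pmf epsI eps_lt.
have [r_ge0 r_sum] := r_pmf; have [Wr_ge0 Wr_sum] := chan_apply_pmf r r_pmf.
set e := eta_KL p W; set B := chi2 r p; set A := chi2 (chan_apply W r) (chan_apply W p).
set M := cubic_dev r p; set M' := cubic_dev (chan_apply W r) (chan_apply W p).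
have epsI' : 0 <= eps <= 1 by lra.
have := KL_mix_taylor p r eps p_gt0 r_ge0 ltac:(by rewrite r_sum p_sum) epsI'.
rewrite ler_distl -/B -/M => /andP[in_ge in_le].
have := KL_mix_taylor (chan_apply W p) (chan_apply W r) eps Wp_gt0 Wr_ge0
  ltac:(by rewrite Wr_sum sum_chan_apply) epsI'.
rewrite ler_distl -chan_apply_mix -/A -/M' => /andP[out_ge _].
have re_pmf : is_pmf (mix p r eps).
  split; first exact: mix_ge0 p r eps (fun x => ltW (p_gt0 x)) r_ge0 epsI'.
  by rewrite sum_mix // r_sum p_sum.
have eps2_gt0 : 0 < eps ^+ 2 / 2 by rewrite divr_gt0 // exprn_gt0; lra.
have KL_re_gt0 : 0 < KL (mix p r eps) p.
  apply: lt_le_trans in_ge.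
  by rewrite (_ : _ - _ = eps ^+ 2 / 2 * (B - eps * M)); [rewrite mulr_gt0 // subr_gt0 | ring].
have out_le : KL (chan_apply W (mix p r eps)) (chan_apply W p) <= e * KL (mix p r eps) p.
  exact: KL_chan_le_eta.
have e_in_le : e * KL (mix p r eps) p <= e * (eps ^+ 2 / 2 * B + eps ^+ 3 / 2 * M).
  by have := ler_wpM2l eta_KL_ge0 in_le.
rewrite -(ler_pM2l eps2_gt0).
have -> : eps ^+ 2 / 2 * (e * B + eps * (M' + e * M))
    = e * (eps ^+ 2 / 2 * B + eps ^+ 3 / 2 * M) + eps ^+ 3 / 2 * M' by ring.
lra.
Qed.

Lemma eta_chi2_le_eta_KL : eta_chi2 p W <= eta_KL p W.
Proof.
apply: contraction_le exists_pmf_chi2_gt0 _ => r r_pmf B_gt0.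
have M_ge0 := cubic_dev_ge0 r p p_gt0.
apply: (@le_of_le_add_small _ _ _ _ (Num.min 1 (chi2 r p / (cubic_dev r p + 1)))).
  by rewrite lt_min ltr01 divr_gt0 //; lra.
move=> eps /andP[eps_gt0]; rewrite lt_min => /andP[eps_lt1].
rewrite ltr_pdivlMr; last lra.
by move=> eps_lt; apply: chi2_chan_le_eta_KL_add => //; [rewrite eps_gt0 | nra].
Qed.

End Channel.

Section Joint.
Context {R : realType} {X Y : finType}.
Variable P : X * Y -> R.
Hypotheses (P_pmf : is_pmf P) (PX_gt0 : forall x, 0 < marg1 P x).

Lemma sum_marg1 : \sum_x marg1 P x = 1.
Proof.
by case: P_pmf => _ <-; rewrite /marg1 pair_bigA; apply: eq_bigr => -[].
Qed.

Lemma chan_ge0 y x : 0 <= chan P y x.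
Proof. by apply: divr_ge0; [case: P_pmf | exact: ltW]. Qed.

Lemma sum_chan x : \sum_y chan P y x = 1.
Proof. by rewrite /chan -mulr_suml -/(marg1 P x) divff // gt_eqF. Qed.

Lemma chan_apply_marg1 y : chan_apply (chan P) (marg1 P) y = marg2 P y.
Proof. by apply: eq_bigr => x _; rewrite /chan divfK // gt_eqF. Qed.

End Joint.

Theorem theorem3 (R : realType) (X Y : finType)
  (hX : (2 <= #|X|)%N) (hY : (2 <= #|Y|)%N)
  (P : X * Y -> R) (hP : is_pmf P)
  (hPX : forall x, 0 < marg1 P x) (hPY : forall y, 0 < marg2 P y) :
  let PX := marg1 P in
  let W := chan P in
  let pmax := \big[Num.max/0]_(A : {set X})
                 Num.min (probset PX A) (1 - probset PX A) in
  let pmin := \big[Num.min/1]_(x : X) PX x in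
  eta_chi2 PX W <= eta_KL PX W /\
  eta_KL PX W <= 2 * eta_chi2 PX W / (phi pmax * pmin).
Proof.
move=> PX W pmax pmin.
have PX_sum : \sum_x PX x = 1 := sum_marg1 P hP.
have WPX_gt0 y : 0 < chan_apply W PX y by rewrite chan_apply_marg1.
have pmax_ge A : Num.min (probset PX A) (1 - probset PX A) <= pmax by exact: le_bigmax.
have pmaxI : 0 < pmax <= 2^-1.
  apply/andP; split.
    have /card_gt0P[x0 _] : (0 < #|X|)%N by apply: leq_trans hX.
    apply: lt_le_trans (pmax_ge [set x0]); rewrite /probset big_set1 lt_min hPX subr_gt0.
    exact: full_support_lt1 hX hPX PX_sum x0.
  apply: bigmax_le => [|A _]; first lra.
  by rewrite ge_min; case: (leP (probset PX A) 2^-1) => ?; apply/orP; [left|right]; lra.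
have pmin_gt0 : 0 < pmin.
  by apply: (big_ind (fun v => 0 < v)) => // u v u_gt0 v_gt0; rewrite lt_min u_gt0.
have pmin_le x : pmin <= PX x by exact: bigmin_le.
have chi2_le r : is_pmf r -> chi2 r PX <= 2 / (phi pmax * pmin) * KL r PX.
  by move=> r_pmf; apply: chi2_le_KL.
have W_ge0 := chan_ge0 P hP hPX; have W_sum := sum_chan P hPX.
split; first exact: eta_chi2_le_eta_KL _ _ hPX PX_sum W_ge0 W_sum WPX_gt0 hX _ chi2_le.
by rewrite mulrAC; apply: eta_KL_le _ _ hPX PX_sum W_ge0 W_sum WPX_gt0 hX _ chi2_le.
Qed.
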